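(* Let $n$ be even and $k \geq 2$, and let $\Sigma=\{1,\dots,k\}$. Then the parity language $L^{\mathrm{even}}_{n,k}=\{w \in \Sigma^n: |w|_j \equiv 0 \pmod 2 \text{ for all } j \in \Sigma\}$ requires regular expressions of length $\mathrm{rpn}(L^{\mathrm{even}}_{n,k}) \geq \Omega\big(n^{k-2} (4k \ln k )^{2-k}\big) = n^{k-2} k^{-\Theta(k)}$.
   Context: $|w|_j$ denotes the number of occurrences of the letter $j$ in the word $w$. Regular expressions are built from $\epsilon$ and letters by union and concatenation (no $\emptyset$); $\mathrm{rpn}(L)$ is the minimum number of syntax-tree nodes of an expression describing $L$. *)

From Stdlib Require Import Reals List Arith PeanoNat.
Import ListNotations.

Inductive regex : Type :=
  | REps : regex
  | RLet : nat -> regex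
  | RUnion : regex -> regex -> regex
  | RCat : regex -> regex -> regex.

Fixpoint lang (e : regex) (w : list nat) : Prop :=
  match e with
  | REps => w = []
  | RLet a => w = [a]
  | RUnion e1 e2 => lang e1 w \/ lang e2 w
  | RCat e1 e2 => exists u v, w = u ++ v /\ lang e1 u /\ lang e2 v
  end.

Fixpoint rsize (e : regex) : nat :=
  match e with
  | REps | RLet _ => 1
  | RUnion e1 e2 | RCat e1 e2 => S (rsize e1 + rsize e2)
  end.

Definition L_even (n k : nat) (w : list nat) : Prop :=
  length w = n /\
  (forall a, In a w -> 1 <= a <= k) /\
  (forall j, 1 <= j <= k -> Nat.even (count_occ Nat.eq_dec w j) = true).

(* Restrict an expression e for L^even_{n,k} to the words whose i-th letter is
   either 1 or the colour 2 + (i mod (k-1)), coded by bit strings.  Restriction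
   commutes with union and concatenation, and every subexpression of e describes
   words of a single length m with a single parity vector.  Any k-1 consecutive
   positions carry distinct colours, so the first min(m, k-1) bits of such a word
   are determined by the other bits and the parities: a subexpression captures at
   most 2^(m - min(m, k-1)) bit strings, and the captured proportion is its
   density.  For e itself the density is 1, since the first k-1 bits can be chosen
   to make every parity even.  By induction on e, (m/3k)^(k-2) times the density
   is at most the size: densities add over a union, and over a concatenation they
   multiply and lose a factor 2^overlap, which pays for the growth of the weight.
   Hence rsize e >= (n/3k)^(k-2), and 3k <= 4 k ln k once k >= 3. *)

From Stdlib Require Import Reals List Arith PeanoNat Lia Lra.
Import ListNotations.

Definition occ (w : list nat) (c : nat) : nat := count_occ Nat.eq_dec w c.

Lemma occ_app u v c : occ (u ++ v) c = occ u c + occ v c.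
Proof. apply count_occ_app. Qed.

Lemma occ_cons a w c : occ (a :: w) c = (if Nat.eq_dec a c then 1 else 0) + occ w c.
Proof. unfold occ; simpl; destruct (Nat.eq_dec a c); reflexivity. Qed.

Lemma occ_not_In w c : ~ In c w -> occ w c = 0.
Proof. apply count_occ_not_In. Qed.

Lemma sum_occ_cons a w l :
  list_sum (map (occ (a :: w)) l) = count_occ Nat.eq_dec l a + list_sum (map (occ w) l).
Proof.
  induction l as [| c l IH]; auto.
  change (occ (a :: w) c + list_sum (map (occ (a :: w)) l) =
          count_occ Nat.eq_dec (c :: l) a + (occ w c + list_sum (map (occ w) l))).
  rewrite occ_cons, IH; simpl; destruct (Nat.eq_dec a c), (Nat.eq_dec c a); simpl; lia.
Qed.

Lemma length_eq_sum_occ w l :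
  NoDup l -> (forall a, In a w -> In a l) -> length w = list_sum (map (occ w) l).
Proof.
  intros Hl; induction w as [| a w IH]; intros Hw.
  - clear Hl Hw; induction l; simpl; auto.
  - rewrite sum_occ_cons, (proj1 (NoDup_count_occ' _ _) Hl a) by (apply Hw; now left).
    simpl; rewrite IH; auto; intros b Hb; apply Hw; now right.
Qed.

Lemma even_list_sum l :
  (forall a, In a l -> Nat.even a = true) -> Nat.even (list_sum l) = true.
Proof.
  induction l as [| a l IH]; intros Hl; simpl; auto.
  rewrite Nat.even_add, Hl, IH; simpl; auto; intros b Hb; apply Hl; now right.
Qed.

Definition same_parities (w w' : list nat) : Prop :=
  forall c, Nat.even (occ w c) = Nat.even (occ w' c).

Lemma same_parities_app_l u u' v :
  same_parities (u ++ v) (u' ++ v) -> same_parities u u'.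
Proof.
  intros H c; specialize (H c); rewrite !occ_app, !Nat.even_add in H.
  destruct (Nat.even (occ u c)), (Nat.even (occ u' c)), (Nat.even (occ v c)); easy.
Qed.

Lemma same_parities_app_r u v v' :
  same_parities (u ++ v) (u ++ v') -> same_parities v v'.
Proof.
  intros H c; specialize (H c); rewrite !occ_app, !Nat.even_add in H.
  destruct (Nat.even (occ u c)), (Nat.even (occ v c)), (Nat.even (occ v' c)); easy.
Qed.

Definition homogeneous (e : regex) : Prop :=
  forall w w', lang e w -> lang e w' -> length w = length w' /\ same_parities w w'.

Lemma lang_inhabited e : exists w, lang e w.
Proof.
  induction e as [| a | f [u Hu] g _ | f [u Hu] g [v Hv]]; simpl; eauto.
  exists (u ++ v), u, v; auto.
Qed.

Lemma homogeneous_union_l f g : homogeneous (RUnion f g) -> homogeneous f.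
Proof. intros H w w' Hw Hw'; apply H; simpl; auto. Qed.

Lemma homogeneous_union_r f g : homogeneous (RUnion f g) -> homogeneous g.
Proof. intros H w w' Hw Hw'; apply H; simpl; auto. Qed.

Lemma homogeneous_cat_l f g : homogeneous (RCat f g) -> homogeneous f.
Proof.
  intros H w w' Hw Hw'; destruct (lang_inhabited g) as [v Hv].
  destruct (H (w ++ v) (w' ++ v)) as [Hlen Hpar]; simpl; eauto 6.
  rewrite !length_app in Hlen; split; [lia | eapply same_parities_app_l; eauto].
Qed.

Lemma homogeneous_cat_r f g : homogeneous (RCat f g) -> homogeneous g.
Proof.
  intros H w w' Hw Hw'; destruct (lang_inhabited f) as [u Hu].
  destruct (H (u ++ w) (u ++ w')) as [Hlen Hpar]; simpl; eauto 6.
  rewrite !length_app in Hlen; split; [lia | eapply same_parities_app_r; eauto].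
Qed.

Lemma homogeneous_L_even e n k :
  (forall w, lang e w <-> L_even n k w) -> homogeneous e.
Proof.
  intros He w w' Hw Hw'.
  apply He in Hw as (Hlen & Hrange & Hpar), Hw' as (Hlen' & Hrange' & Hpar').
  split; [congruence|]; intros c.
  destruct (le_dec 1 c), (le_dec c k).
  1: rewrite Hpar, Hpar'; auto.
  all: rewrite !occ_not_In; auto; intros Hc;
    [apply Hrange' in Hc | apply Hrange in Hc]; lia.
Qed.

Fixpoint rlen (e : regex) : nat :=
  match e with
  | REps => 0
  | RLet _ => 1
  | RUnion f _ => rlen f
  | RCat f g => rlen f + rlen g
  end.

Lemma length_lang e w : homogeneous e -> lang e w -> length w = rlen e.
Proof.
  revert w; induction e as [| a | f IHf g _ | f IHf g IHg]; simpl; intros w H Hw.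
  - now subst.
  - now subst.
  - destruct (lang_inhabited f) as [u Hu].
    rewrite <- (IHf u (homogeneous_union_l _ _ H) Hu).
    apply H; simpl; tauto.
  - destruct Hw as (u & v & -> & Hu & Hv); rewrite length_app.
    rewrite (IHf u (homogeneous_cat_l _ _ H) Hu), (IHg v (homogeneous_cat_r _ _ H) Hv).
    reflexivity.
Qed.

Lemma rlen_L_even e n k : (forall w, lang e w <-> L_even n k w) -> rlen e = n.
Proof.
  intros He; destruct (lang_inhabited e) as [w Hw].
  rewrite <- (length_lang e w); [| eapply homogeneous_L_even | ]; eauto.
  now apply He in Hw as [-> _].
Qed.

Lemma rlen_union f g : homogeneous (RUnion f g) -> rlen g = rlen f.
Proof.
  intros H; destruct (lang_inhabited f) as [u Hu], (lang_inhabited g) as [v Hv].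
  rewrite <- (length_lang _ _ (homogeneous_union_l _ _ H) Hu),
    <- (length_lang _ _ (homogeneous_union_r _ _ H) Hv).
  apply H; simpl; auto.
Qed.

Fixpoint bitstrings (m : nat) : list (list bool) :=
  match m with
  | 0 => [[]]
  | S m' => map (cons false) (bitstrings m') ++ map (cons true) (bitstrings m')
  end.

Lemma length_bitstrings m : length (bitstrings m) = 2 ^ m.
Proof. induction m; simpl; auto; rewrite length_app, !length_map; lia. Qed.

Lemma in_bitstrings m x : In x (bitstrings m) <-> length x = m.
Proof.
  revert x; induction m as [| m IH]; intros x; simpl.
  - split; [intros [<- | []] | destruct x]; simpl; auto; discriminate.
  - rewrite in_app_iff, !in_map_iff; split.
    + intros [(y & <- & Hy) | (y & <- & Hy)]; simpl; f_equal; apply IH; auto.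
    + destruct x as [| b x]; [discriminate|]; injection 1 as Hx.
      destruct b; [right | left]; exists x; rewrite IH; auto.
Qed.

Lemma NoDup_bitstrings m : NoDup (bitstrings m).
Proof.
  induction m as [| m IH]; simpl; [repeat constructor; simpl; tauto|].
  apply NoDup_app.
  1, 2: apply NoDup_map_NoDup_ForallPairs; auto; intros x y _ _; now injection 1.
  intros x Hx Hx'; apply in_map_iff in Hx as (? & <- & _), Hx' as (? & ? & _); discriminate.
Qed.

Definition concat_all (l1 l2 : list (list bool)) : list (list bool) :=
  flat_map (fun x => map (fun y => x ++ y) l2) l1.

Lemma in_concat_all l1 l2 x :
  In x (concat_all l1 l2) <-> exists x1 x2, x = x1 ++ x2 /\ In x1 l1 /\ In x2 l2.
Proof.
  unfold concat_all; rewrite in_flat_map; split.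
  - intros (x1 & H1 & H2); apply in_map_iff in H2 as (x2 & <- & H2); eauto.
  - intros (x1 & x2 & -> & H1 & H2); exists x1; split; auto; now apply in_map.
Qed.

Definition card (l : list (list bool)) : nat := length (nodup (list_eq_dec Bool.bool_dec) l).

Lemma card_le_pow2 l (f : list bool -> list bool) m :
  (forall x y, In x l -> In y l -> f x = f y -> x = y) ->
  (forall x, In x l -> length (f x) = m) -> card l <= 2 ^ m.
Proof.
  intros Hinj Hlen; unfold card.
  rewrite <- length_bitstrings, <- (length_map f); apply NoDup_incl_length.
  - apply NoDup_map_NoDup_ForallPairs; [|apply NoDup_nodup].
    intros x y Hx Hy; apply nodup_In in Hx, Hy; auto.
  - intros z Hz; apply in_map_iff in Hz as (x & <- & Hx); apply nodup_In in Hx.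
    now apply in_bitstrings, Hlen.
Qed.

Lemma pow2_le_card l (f : list bool -> list bool) m :
  (forall x y, f x = f y -> x = y) ->
  (forall y, length y = m -> In (f y) l) -> 2 ^ m <= card l.
Proof.
  intros Hinj Hin; unfold card.
  rewrite <- length_bitstrings, <- (length_map f); apply NoDup_incl_length.
  - apply NoDup_map_NoDup_ForallPairs; [intros x y _ _; apply Hinj | apply NoDup_bitstrings].
  - intros z Hz; apply in_map_iff in Hz as (y & <- & Hy).
    now apply nodup_In, Hin, in_bitstrings.
Qed.

Lemma card_app l1 l2 : card (l1 ++ l2) <= card l1 + card l2.
Proof.
  unfold card; rewrite <- length_app; apply NoDup_incl_length; [apply NoDup_nodup|].
  intros z; rewrite nodup_In, !in_app_iff, !nodup_In; auto.
Qed.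

Lemma card_concat_all l1 l2 : card (concat_all l1 l2) <= card l1 * card l2.
Proof.
  unfold card; rewrite <- length_prod, <- (length_map (fun '(x, y) => x ++ y)).
  apply NoDup_incl_length; [apply NoDup_nodup|].
  intros z; rewrite nodup_In, in_concat_all; intros (x & y & -> & Hx & Hy).
  apply in_map_iff; exists (x, y); split; auto; apply in_prod; apply nodup_In; auto.
Qed.

Section Restriction.
Variable K : nat.

Definition letter (i : nat) (b : bool) : nat := if b then i mod K + 2 else 1.

Fixpoint decode (i : nat) (x : list bool) : list nat :=
  match x with
  | [] => []
  | b :: x' => letter i b :: decode (S i) x'
  end.

Lemma length_decode i x : length (decode i x) = length x.
Proof. revert i; induction x; simpl; auto. Qed.

Lemma decode_app i x y : decode i (x ++ y) = decode i x ++ decode (i + length x) y.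
Proof.
  revert i; induction x as [| b x IH]; intros i; simpl.
  - now rewrite Nat.add_0_r.
  - rewrite IH; do 3 f_equal; lia.
Qed.

Lemma decode_eq_app i x u v :
  decode i x = u ++ v ->
  exists x1 x2, x = x1 ++ x2 /\ decode i x1 = u /\ decode (i + length x1) x2 = v.
Proof.
  revert i x; induction u as [| a u IH]; intros i x Hx.
  - exists [], x; simpl; rewrite Nat.add_0_r; auto.
  - destruct x as [| b x]; [discriminate|]; injection Hx as <- Hx.
    destruct (IH _ _ Hx) as (x1 & x2 & -> & <- & <-).
    exists (b :: x1), x2; simpl; rewrite <- plus_n_Sm; auto.
Qed.

Fixpoint restrict (i : nat) (e : regex) : list (list bool) :=
  match e with
  | REps => [[]]
  | RLet a => map (fun b => [b]) (filter (fun b => a =? letter i b) [false; true])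
  | RUnion f g => restrict i f ++ restrict i g
  | RCat f g => concat_all (restrict i f) (restrict (i + rlen f) g)
  end.

Lemma in_restrict e i x : homogeneous e -> In x (restrict i e) <-> lang e (decode i x).
Proof.
  revert i x; induction e as [| a | f IHf g IHg | f IHf g IHg]; intros i x H; cbn [restrict lang].
  - split; [intros [<- | []] | destruct x]; simpl; auto; discriminate.
  - rewrite in_map_iff; split.
    + intros (b & <- & Hb); apply filter_In in Hb as [_ Hb]; apply Nat.eqb_eq in Hb.
      simpl; congruence.
    + destruct x as [| b [| ? ?]]; try discriminate; injection 1 as <-.
      exists b; split; auto; apply filter_In; split.
      * destruct b; simpl; auto.
      * apply Nat.eqb_refl.
  - rewrite in_app_iff, IHf, IHg;
      [tauto | eapply homogeneous_union_r | eapply homogeneous_union_l]; eauto.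
  - pose proof (homogeneous_cat_l _ _ H) as Hf; pose proof (homogeneous_cat_r _ _ H) as Hg.
    rewrite in_concat_all; split.
    + intros (x1 & x2 & -> & H1 & H2).
      apply IHf in H1; auto; apply IHg in H2; auto.
      pose proof (length_lang _ _ Hf H1) as Hlen; rewrite length_decode in Hlen.
      exists (decode i x1), (decode (i + length x1) x2).
      rewrite decode_app, Hlen; auto.
    + intros (u & v & Huv & Hu & Hv).
      destruct (decode_eq_app _ _ _ _ Huv) as (x1 & x2 & -> & <- & <-).
      pose proof (length_lang _ _ Hf Hu) as Hlen; rewrite length_decode in Hlen.
      exists x1, x2; rewrite IHf, IHg, <- Hlen; auto.
Qed.

Hypothesis K_pos : 0 < K.

Lemma mod_neq i j : i < j < i + K -> j mod K <> i mod K.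
Proof.
  intros Hij E.
  pose proof (Nat.div_mod_eq i K); pose proof (Nat.div_mod_eq j K).
  destruct (Nat.le_gt_cases (j / K) (i / K)) as [Hq | Hq].
  - pose proof (Nat.mul_le_mono_l _ _ K Hq); lia.
  - pose proof (Nat.mul_le_mono_l _ _ K Hq); lia.
Qed.

Lemma letter_not_in_decode i j z :
  i < j -> j + length z <= i + K -> ~ In (letter i true) (decode j z).
Proof.
  revert j; induction z as [| b z IH]; intros j Hij Hz Hin; simpl in *; [easy|].
  destruct Hin as [Hin | Hin]; [| apply (IH (S j)); auto; lia].
  destruct b; unfold letter in Hin; [apply (mod_neq i j) |]; lia.
Qed.

Lemma decode_prefix_determined i x y :
  length x = length y -> length x <= K ->
  same_parities (decode i x) (decode i y) -> x = y.
Proof.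
  revert i y; induction x as [| b x IH]; intros i [| b' y] Hlen HK Hpar;
    simpl in Hlen, HK; try discriminate; [reflexivity|].
  assert (Hb : b = b').
  { specialize (Hpar (letter i true)); simpl decode in Hpar.
    rewrite !occ_cons, !occ_not_In in Hpar by (apply letter_not_in_decode; lia).
    destruct b, b'; auto; unfold letter in Hpar;
      destruct (Nat.eq_dec 1 (i mod K + 2)), (Nat.eq_dec (i mod K + 2) (i mod K + 2));
      easy || lia. }
  subst b'; f_equal; apply (IH (S i)); try lia.
  exact (same_parities_app_r [letter i b] _ _ Hpar).
Qed.

Lemma card_restrict_le i e :
  homogeneous e -> card (restrict i e) <= 2 ^ (rlen e - Nat.min (rlen e) K).
Proof.
  intros He; set (r := Nat.min (rlen e) K).
  assert (Hlen : forall x, In x (restrict i e) -> length x = rlen e).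
  { intros x Hx; rewrite <- (length_decode i x).
    apply length_lang; auto; apply in_restrict; auto. }
  apply card_le_pow2 with (f := skipn r).
  - intros x y Hx Hy Hxy.
    pose proof (Hlen x Hx) as Hx'; pose proof (Hlen y Hy) as Hy'.
    assert (Hpar : same_parities (decode i x) (decode i y))
      by (apply He; apply in_restrict; auto).
    rewrite <- (firstn_skipn r x), <- (firstn_skipn r y) in Hpar.
    rewrite !decode_app, !length_firstn, Hx', Hy', Hxy in Hpar.
    rewrite <- (firstn_skipn r x), <- (firstn_skipn r y), Hxy; f_equal.
    apply (decode_prefix_determined i); rewrite ?length_firstn; try lia.
    exact (same_parities_app_l _ _ _ Hpar).
  - intros x Hx; rewrite length_skipn, Hlen; auto.
Qed.

Lemma in_decode_range i x a : In a (decode i x) -> 1 <= a <= S K.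
Proof.
  revert i; induction x as [| b x IH]; intros i Ha; [destruct Ha|].
  destruct Ha as [<- | Ha]; eauto.
  pose proof (Nat.mod_upper_bound i K); destruct b; simpl; lia.
Qed.

Definition parity_prefix (y : list bool) : list bool :=
  map (fun j => Nat.odd (occ (decode K y) (j + 2))) (seq 0 K).

Lemma length_parity_prefix y : length (parity_prefix y) = K.
Proof. unfold parity_prefix; now rewrite length_map, length_seq. Qed.

Lemma occ_decode_map_seq (f : nat -> bool) s r j :
  s + r <= K ->
  occ (decode s (map f (seq s r))) (j + 2) =
  if ((s <=? j) && (j <? s + r) && f j)%bool then 1 else 0.
Proof.
  revert s; induction r as [| r IH]; intros s Hr.
  - simpl; destruct (Nat.leb_spec s j), (Nat.ltb_spec j (s + 0)); simpl; auto; lia.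
  - cbn [seq map decode]; rewrite occ_cons, IH by lia; unfold letter; rewrite Nat.mod_small by lia.
    destruct (Nat.leb_spec s j), (Nat.leb_spec (S s) j),
      (Nat.ltb_spec j (s + S r)), (Nat.ltb_spec j (S s + r)); simpl; try lia.
    all: destruct (Nat.eq_dec j s) as [-> | Hjs]; try lia;
      destruct (f s); destruct Nat.eq_dec; lia.
Qed.

Lemma skipn_parity_completion y : skipn K (parity_prefix y ++ y) = y.
Proof.
  rewrite skipn_app, length_parity_prefix, Nat.sub_diag, skipn_all2; auto.
  now rewrite length_parity_prefix.
Qed.

Lemma L_even_parity_completion n y :
  K <= n -> Nat.Even n -> length y = n - K ->
  L_even n (S K) (decode 0 (parity_prefix y ++ y)).
Proof.
  intros HKn Hn Hy; set (w := decode 0 (parity_prefix y ++ y)).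
  assert (Hcolour : forall j, j < K -> Nat.even (occ w (j + 2)) = true).
  { intros j Hj; unfold w; rewrite decode_app, length_parity_prefix, occ_app.
    unfold parity_prefix at 1; rewrite occ_decode_map_seq by lia; simpl.
    rewrite (proj2 (Nat.ltb_lt j K) Hj), Nat.even_add; unfold Nat.odd.
    destruct (Nat.even (occ (decode K y) (j + 2))); reflexivity. }
  assert (Hrange : forall a, In a w -> 1 <= a <= S K) by apply in_decode_range.
  assert (Hlen : length w = n)
    by (unfold w; rewrite length_decode, length_app, length_parity_prefix; lia).
  split; [|split]; auto.
  intros c Hc; destruct (Nat.eq_dec c 1) as [-> | Hc1].
  - assert (Hsum : length w = list_sum (map (occ w) (seq 1 (S K)))).
    { apply length_eq_sum_occ; [apply seq_NoDup|].
      intros a Ha; apply in_seq; apply Hrange in Ha; lia. }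
    rewrite Hlen in Hsum; change (n = occ w 1 + list_sum (map (occ w) (seq 2 K))) in Hsum.
    apply Nat.even_spec in Hn; rewrite Hsum, Nat.even_add, even_list_sum in Hn.
    + change (Nat.even (occ w 1) = true); now destruct (Nat.even (occ w 1)).
    + intros a Ha; apply in_map_iff in Ha as (b & <- & Hb); apply in_seq in Hb.
      replace b with ((b - 2) + 2) by lia; apply Hcolour; lia.
  - replace c with ((c - 2) + 2) by lia; apply Hcolour; lia.
Qed.

Lemma pow2_le_card_restrict n e :
  K <= n -> Nat.Even n -> (forall w, lang e w <-> L_even n (S K) w) ->
  2 ^ (n - K) <= card (restrict 0 e).
Proof.
  intros HKn Hn He.
  apply pow2_le_card with (f := fun y => parity_prefix y ++ y).
  - intros x y Hxy; rewrite <- (skipn_parity_completion x), Hxy; apply skipn_parity_completion.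
  - intros y Hy; apply in_restrict; [eapply homogeneous_L_even; eauto|].
    apply He, L_even_parity_completion; auto.
Qed.

End Restriction.

Open Scope R_scope.

Definition excess (K m : nat) : nat := m - Nat.min m K.

Definition overlap (K a b : nat) : nat := Nat.min a K + Nat.min b K - Nat.min (a + b) K.

Lemma excess_add K a b : excess K (a + b) = (excess K a + excess K b + overlap K a b)%nat.
Proof. unfold excess, overlap; lia. Qed.

Definition density (K i : nat) (e : regex) : R :=
  INR (card (restrict K i e)) / 2 ^ excess K (rlen e).

Lemma density_nonneg K i e : 0 <= density K i e.
Proof.
  unfold density, Rdiv; apply Rmult_le_pos; [apply pos_INR|].
  left; apply Rinv_0_lt_compat, pow_lt; lra.
Qed.

Lemma density_le_1 K i e : (0 < K)%nat -> homogeneous e -> density K i e <= 1.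
Proof.
  intros HK He; unfold density.
  assert (Hpos : 0 < 2 ^ excess K (rlen e)) by (apply pow_lt; lra).
  assert (Hcard : INR (card (restrict K i e)) <= 2 ^ excess K (rlen e)).
  { replace 2 with (INR 2) by reflexivity; rewrite <- pow_INR.
    apply le_INR, card_restrict_le; auto. }
  apply Rmult_le_reg_r with (2 ^ excess K (rlen e)); auto.
  unfold Rdiv; rewrite Rmult_assoc, Rinv_l; lra.
Qed.

Lemma density_union K i f g :
  homogeneous (RUnion f g) -> density K i (RUnion f g) <= density K i f + density K i g.
Proof.
  intros H; unfold density; cbn [restrict rlen]; rewrite (rlen_union _ _ H).
  unfold Rdiv; rewrite <- Rmult_plus_distr_r, <- plus_INR.
  apply Rmult_le_compat_r; [left; apply Rinv_0_lt_compat, pow_lt; lra|].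
  apply le_INR, card_app.
Qed.

Lemma density_cat K i f g :
  density K i (RCat f g) * 2 ^ overlap K (rlen f) (rlen g) <=
  density K i f * density K (i + rlen f) g.
Proof.
  pose proof (card_concat_all (restrict K i f) (restrict K (i + rlen f) g)) as Hcard.
  apply le_INR in Hcard; rewrite mult_INR in Hcard.
  unfold density; cbn [restrict rlen]; rewrite excess_add, !pow_add.
  set (P := 2 ^ excess K (rlen f)); set (Q := 2 ^ excess K (rlen g)).
  set (E := 2 ^ overlap K (rlen f) (rlen g)).
  assert (HP : 0 < P) by (apply pow_lt; lra).
  assert (HQ : 0 < Q) by (apply pow_lt; lra).
  assert (HE : 0 < E) by (apply pow_lt; lra).
  set (C := INR (card (concat_all _ _))) in *.
  replace (C / (P * Q * E) * E) with (C * / (P * Q)) by (field; lra).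
  replace (_ / P * (_ / Q)) with (INR (card (restrict K i f)) *
    INR (card (restrict K (i + rlen f) g)) * / (P * Q)) by (field; lra).
  apply Rmult_le_compat_r; auto; left; apply Rinv_0_lt_compat; nra.
Qed.

Lemma one_le_density_L_even K n e :
  (0 < K)%nat -> (K <= n)%nat -> Nat.Even n ->
  (forall w, lang e w <-> L_even n (S K) w) -> 1 <= density K 0 e.
Proof.
  intros HK HKn Hn He.
  assert (Hpos : 0 < 2 ^ excess K n) by (apply pow_lt; lra).
  assert (Hcard : 2 ^ excess K n <= INR (card (restrict K 0 e))).
  { replace 2 with (INR 2) by reflexivity; rewrite <- pow_INR; apply le_INR.
    unfold excess; replace (Nat.min n K) with K by lia.
    apply pow2_le_card_restrict; auto. }
  unfold density; rewrite (rlen_L_even _ _ _ He).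
  apply Rmult_le_reg_r with (2 ^ excess K n); auto.
  unfold Rdiv; rewrite Rmult_assoc, Rinv_l; lra.
Qed.

Lemma exp_le_exp x y : x <= y -> exp x <= exp y.
Proof. intros [H | ->]; [left; now apply exp_increasing | right; reflexivity]. Qed.

Lemma exp_mul_INR n x : exp (INR n * x) = exp x ^ n.
Proof. rewrite <- Rpower_pow by apply exp_pos; unfold Rpower; now rewrite ln_exp. Qed.

Lemma exp_half_le_2 : exp (1 / 2) <= 2.
Proof.
  assert (H : exp (1 / 2) * exp (1 / 2) = exp 1) by (rewrite <- exp_plus; f_equal; lra).
  pose proof exp_le_3; pose proof (exp_pos (1 / 2)); nra.
Qed.

Lemma one_plus_div_pow_le (a b N : nat) :
  (0 < b)%nat -> (2 * N <= b)%nat -> (1 + INR a / INR b) ^ N <= 2 ^ a.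
Proof.
  intros Hb HN.
  assert (Hb' : 0 < INR b) by (apply lt_0_INR; lia).
  assert (HN' : 2 * INR N <= INR b)
    by (replace 2 with (INR 2) by reflexivity; rewrite <- mult_INR; apply le_INR; lia).
  set (q := INR a / INR b).
  assert (Hq : q * INR b = INR a) by (unfold q; field; lra).
  assert (Hq0 : 0 <= q).
  { unfold q, Rdiv; apply Rmult_le_pos; [apply pos_INR|].
    left; now apply Rinv_0_lt_compat. }
  apply Rle_trans with (exp q ^ N); [apply pow_incr; split; [lra | apply exp_ineq1_le]|].
  rewrite <- exp_mul_INR; apply Rle_trans with (exp (1 / 2) ^ a).
  - rewrite <- exp_mul_INR; apply exp_le_exp; pose proof (pos_INR N); nra.
  - apply pow_incr; split; [left; apply exp_pos | apply exp_half_le_2].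
Qed.

Lemma pow_le_one x n : 0 <= x <= 1 -> x ^ n <= 1.
Proof. intros Hx; rewrite <- (pow1 n); now apply pow_incr. Qed.

(* With 3k in the denominator, a long concatenation whose shorter factor has
   length a < k - 1 has a longer factor of length b > 2k, as needed to apply
   [one_plus_div_pow_le] with N = k - 2. *)
Definition weight (k m : nat) : R := (INR m / (3 * INR k)) ^ (k - 2).

Section Weight.
Variable k : nat.
Hypothesis two_le_k : (2 <= k)%nat.

Lemma three_k_pos : 0 < 3 * INR k.
Proof. assert (0 < INR k) by (apply lt_0_INR; lia); lra. Qed.

Lemma weight_base_nonneg m : 0 <= INR m / (3 * INR k).
Proof.
  unfold Rdiv; apply Rmult_le_pos; [apply pos_INR|].
  left; apply Rinv_0_lt_compat, three_k_pos.
Qed.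

Lemma weight_nonneg m : 0 <= weight k m.
Proof. apply pow_le, weight_base_nonneg. Qed.

Lemma weight_le_1 m : (m <= 3 * k)%nat -> weight k m <= 1.
Proof.
  intros Hm; apply pow_le_one; split; [apply weight_base_nonneg|].
  pose proof three_k_pos.
  assert (INR m <= 3 * INR k)
    by (replace 3 with (INR 3) by (simpl; lra); rewrite <- mult_INR; apply le_INR; lia).
  apply Rmult_le_reg_r with (3 * INR k); auto.
  unfold Rdiv; rewrite Rmult_assoc, Rinv_l; lra.
Qed.

Lemma weight_add_short a b :
  (a < k - 1)%nat -> (3 * k < a + b)%nat -> weight k (a + b) <= weight k b * 2 ^ a.
Proof.
  intros Ha Hab; pose proof three_k_pos.
  assert (Hb : 0 < INR b) by (apply lt_0_INR; lia).
  unfold weight.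
  replace (INR (a + b) / (3 * INR k)) with (INR b / (3 * INR k) * (1 + INR a / INR b))
    by (rewrite plus_INR; field; lra).
  rewrite Rpow_mult_distr; apply Rmult_le_compat_l.
  - apply pow_le, weight_base_nonneg.
  - apply one_plus_div_pow_le; lia.
Qed.

Lemma weight_add_le a b : (b <= a)%nat -> weight k (a + b) <= weight k a * 2 ^ (k - 2).
Proof.
  intros Hba; unfold weight; rewrite <- Rpow_mult_distr; apply pow_incr.
  split; [apply weight_base_nonneg|].
  assert (0 < / (3 * INR k)) by (apply Rinv_0_lt_compat, three_k_pos).
  assert (INR b <= INR a) by (apply le_INR; lia).
  unfold Rdiv; rewrite plus_INR; nra.
Qed.

Lemma weight_split a b :
  weight k (a + b) <= 2 ^ overlap (k - 1) a b \/
  weight k (a + b) <= weight k a * 2 ^ overlap (k - 1) a b \/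
  weight k (a + b) <= weight k b * 2 ^ overlap (k - 1) a b.
Proof.
  destruct (le_lt_dec (a + b) (3 * k)) as [Hs | Hs].
  { left; apply Rle_trans with 1; [now apply weight_le_1 | apply pow_R1_Rle; lra]. }
  destruct (lt_dec a (k - 1)) as [Ha | Ha].
  { right; right; replace (overlap (k - 1) a b) with a by (unfold overlap; lia).
    now apply weight_add_short. }
  destruct (lt_dec b (k - 1)) as [Hb | Hb].
  { right; left; replace (overlap (k - 1) a b) with b by (unfold overlap; lia).
    rewrite Nat.add_comm; apply weight_add_short; lia. }
  replace (overlap (k - 1) a b) with (k - 1)%nat by (unfold overlap; lia).
  assert (H2 : 2 ^ (k - 2) <= 2 ^ (k - 1)) by (apply Rle_pow; [lra | lia]).
  destruct (le_lt_dec b a) as [Hba | Hab]; right; [left | right].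
  - eapply Rle_trans; [now apply weight_add_le|].
    apply Rmult_le_compat_l; auto using weight_nonneg.
  - rewrite Nat.add_comm; eapply Rle_trans; [apply weight_add_le; lia|].
    apply Rmult_le_compat_l; auto using weight_nonneg.
Qed.

End Weight.

Lemma one_le_rsize e : 1 <= INR (rsize e).
Proof. apply (le_INR 1); destruct e; simpl; lia. Qed.

Lemma weight_density_le_1 k i e :
  (2 <= k)%nat -> (rlen e <= 3 * k)%nat -> homogeneous e ->
  weight k (rlen e) * density (k - 1) i e <= 1.
Proof.
  intros Hk He Hom.
  pose proof (weight_nonneg k Hk (rlen e)); pose proof (weight_le_1 k Hk _ He).
  pose proof (density_nonneg (k - 1) i e); pose proof (density_le_1 (k - 1) i e ltac:(lia) Hom).
  nra.
Qed.

Lemma weight_density_cat k i f g :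
  (2 <= k)%nat -> homogeneous (RCat f g) ->
  let potential := weight k (rlen f + rlen g) * density (k - 1) i (RCat f g) in
  potential <= 1 \/
  potential <= weight k (rlen f) * density (k - 1) i f \/
  potential <= weight k (rlen g) * density (k - 1) (i + rlen f) g.
Proof.
  intros Hk He potential.
  set (E := 2 ^ overlap (k - 1) (rlen f) (rlen g)).
  set (D := density (k - 1) i (RCat f g)).
  set (df := density (k - 1) i f); set (dg := density (k - 1) (i + rlen f) g).
  assert (Hcat : D * E <= df * dg) by apply density_cat.
  assert (HD : 0 <= D) by apply density_nonneg.
  assert (Hdf : 0 <= df <= 1).
  { split; [apply density_nonneg | apply density_le_1; [lia | eapply homogeneous_cat_l; eauto]]. }
  assert (Hdg : 0 <= dg <= 1).
  { split; [apply density_nonneg | apply density_le_1; [lia | eapply homogeneous_cat_r; eauto]]. }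
  assert (Hprod : df * dg <= df /\ df * dg <= dg) by (split; nra).
  pose proof (weight_nonneg k Hk (rlen f)); pose proof (weight_nonneg k Hk (rlen g)).
  destruct (weight_split k Hk (rlen f) (rlen g)) as [Hw | [Hw | Hw]];
    [left | right; left | right; right]; fold E in Hw; unfold potential; fold D df dg.
  - apply Rle_trans with (D * E); nra.
  - apply Rle_trans with (weight k (rlen f) * (D * E)); nra.
  - apply Rle_trans with (weight k (rlen g) * (D * E)); nra.
Qed.

Lemma weight_density_le_rsize k i e :
  (2 <= k)%nat -> homogeneous e -> weight k (rlen e) * density (k - 1) i e <= INR (rsize e).
Proof.
  intros Hk; revert i; induction e as [| a | f IHf g IHg | f IHf g IHg]; intros i He.
  1, 2: eapply Rle_trans; [apply weight_density_le_1; auto; simpl; lia | apply one_le_rsize].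
  - pose proof (homogeneous_union_l _ _ He) as Hf; pose proof (homogeneous_union_r _ _ He) as Hg.
    specialize (IHf i Hf); specialize (IHg i Hg); rewrite (rlen_union _ _ He) in IHg.
    pose proof (density_union (k - 1) i _ _ He); pose proof (weight_nonneg k Hk (rlen f)).
    cbn [rlen rsize]; rewrite S_INR, plus_INR; nra.
  - specialize (IHf i (homogeneous_cat_l _ _ He)).
    specialize (IHg (i + rlen f)%nat (homogeneous_cat_r _ _ He)).
    pose proof (pos_INR (rsize f)); pose proof (pos_INR (rsize g)).
    cbn [rlen rsize]; rewrite S_INR, plus_INR.
    destruct (weight_density_cat k i f g Hk He) as [Hp | [Hp | Hp]]; lra.
Qed.

Lemma weight_le_rsize_L_even n k e :
  Nat.Even n -> (2 <= k)%nat -> (forall w, lang e w <-> L_even n k w) ->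
  weight k n <= INR (rsize e).
Proof.
  intros Hn Hk He.
  destruct (le_lt_dec n (3 * k)) as [Hsmall | Hlarge].
  { eapply Rle_trans; [apply weight_le_1 | apply one_le_rsize]; auto. }
  assert (Hdens : 1 <= density (k - 1) 0 e).
  { apply (one_le_density_L_even (k - 1) n); try lia; auto.
    now replace (S (k - 1)) with k by lia. }
  pose proof (weight_nonneg k Hk n).
  pose proof (weight_density_le_rsize k 0 e Hk (homogeneous_L_even _ _ _ He)) as Hpot.
  rewrite (rlen_L_even _ _ _ He) in Hpot; nra.
Qed.

Lemma one_le_ln k : (3 <= k)%nat -> 1 <= ln (INR k).
Proof.
  intros Hk; destruct (Rlt_or_le (ln (INR k)) 1) as [Hlt | Hle]; auto.
  assert (H3 : 3 <= INR k) by (replace 3 with (INR 3) by (simpl; lra); now apply le_INR).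
  apply exp_increasing in Hlt; rewrite exp_ln in Hlt by lra.
  pose proof exp_le_3; lra.
Qed.

Lemma pow_div_le_weight n k :
  (2 <= k)%nat -> INR n ^ (k - 2) / (4 * INR k * ln (INR k)) ^ (k - 2) <= weight k n.
Proof.
  intros Hk; destruct (Nat.eq_dec k 2) as [-> | Hk3]; [unfold weight; simpl; lra|].
  pose proof (one_le_ln k ltac:(lia)); pose proof (three_k_pos k Hk).
  unfold weight, Rdiv; rewrite (Rpow_mult_distr (INR n)), pow_inv.
  apply Rmult_le_compat_l; [apply pow_le, pos_INR|].
  apply Rinv_le_contravar; [now apply pow_lt|].
  apply pow_incr; nra.
Qed.

Theorem theorem7p3 :
  exists c : R, 0 < c /\
    forall (n k : nat), Nat.Even n -> (2 <= k)%nat ->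
    forall e : regex, (forall w, lang e w <-> L_even n k w) ->
      c * (INR n) ^ (k - 2) / (4 * INR k * ln (INR k)) ^ (k - 2)
        <= INR (rsize e).
Proof.
  exists 1; split; [lra|]; intros n k Hn Hk e He.
  rewrite Rmult_1_l; eapply Rle_trans.
  - now apply pow_div_le_weight.
  - now apply weight_le_rsize_L_even.
Qed.
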